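(* Let $\mu>0$, $u_a\in\mathbb{R}$, $\alpha_\pm>0$, $u_->u_+$, with Riemann data $(\alpha_0,u_0)=(\alpha_-,u_-)$ for $x<0$, $(\alpha_+,u_+)$ for $x>0$. Let $u_l(t)=u_a+(u_--u_a)e^{-\mu t}$, $u_r(t)=u_a+(u_+-u_a)e^{-\mu t}$, $\alpha_l\equiv\alpha_-$, $\alpha_r\equiv\alpha_+$. Let $(\omega,\sigma)\in\mathcal{C}^1([0,\infty))^2$ be a solution of the generalized Rankine–Hugoniot conditions $$\frac{d\omega}{dt}=(\alpha_r-\alpha_l)\sigma-(\alpha_ru_r-\alpha_lu_l),\quad \frac{d(\omega\sigma)}{dt}=(\alpha_ru_r-\alpha_lu_l)\sigma-(\alpha_ru_r^2-\alpha_lu_l^2)+\mu(u_a-\sigma)\omega,$$ with $\omega(0)=0$, satisfying $u_r(t)<\sigma(t)<u_l(t)$ for all $t\ge0$, and let $\xi(t)=\int_0^t\sigma(s)ds$. Then $\alpha=\alpha^0+\omega(t)\delta(x-\xi(t))$, $u=u^0$, with $(\alpha^0,u^0)=(\alpha_-,u_l(t))$ for $x<\xi(t)$ and $(\alpha_+,u_r(t))$ for $x>\xi(t)$, is a $\delta$-shock solution (weak solution satisfying Lax's entropy condition) of the Eulerian droplet model with these Riemann data.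
   Context: The Eulerian droplet model: $\partial_t\alpha+\partial_x(\alpha u)=0$, $\partial_t(\alpha u)+\partial_x(\alpha u^2)=\mu\alpha(u_a-u)$. For $\psi\in\mathcal{C}_0^\infty(\mathbb{R}\times[0,\infty))$: $\langle\alpha,\psi\rangle=\int_0^\infty\int\alpha^0\psi+\int_0^\infty\omega\psi(\xi(t),t)dt$, $\langle\alpha u,\psi\rangle=\int_0^\infty\int\alpha^0u^0\psi+\int_0^\infty\omega\xi'\psi(\xi(t),t)dt$, $\langle\alpha u^2,\psi\rangle=\int_0^\infty\int\alpha^0(u^0)^2\psi+\int_0^\infty\sigma\omega\xi'\psi(\xi(t),t)dt$, $\langle\alpha(u_a-u),\psi\rangle=\int_0^\infty\int\alpha^0(u_a-u^0)\psi+\int_0^\infty(u_a-\sigma)\omega\psi(\xi(t),t)dt$. Weak solution with $\omega_0=0$: for all such $\psi$, $\langle\alpha,\psi_t\rangle+\langle\alpha u,\psi_x\rangle=-\int\alpha_0\psi(x,0)dx$ and $\langle\alpha u,\psi_t\rangle+\langle\alpha u^2,\psi_x\rangle+\mu\langle\alpha(u_a-u),\psi\rangle=-\int\alpha_0u_0\psi(x,0)dx$. *)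

From Stdlib Require Import Reals Lra.
Open Scope R_scope.

Definition RInt_rel (f : R -> R) (a b v : R) : Prop :=
  exists pr : Riemann_integrable f a b, RiemannInt pr = v.

(** Integral over the whole line, for (eventually) compactly supported f:
    the integrals over [-M,M] are equal to [v] for all large M. *)
Definition IntR (f : R -> R) (v : R) : Prop :=
  exists L, forall M, L <= M -> RInt_rel f (- M) M v.

Definition Int0inf (g : R -> R) (v : R) : Prop :=
  exists T, 0 <= T /\ forall S, T <= S -> RInt_rel g 0 S v.

Definition DInt (F : R -> R -> R) (v : R) : Prop :=
  exists I : R -> R,
    (forall t, 0 <= t -> IntR (fun x => F x t) (I t)) /\ Int0inf I v.

(** * Test functions C_0^oo(R x [0,oo)) (restrictions of C_c^oo(R^2)) *)

Definition cont2 (f : R -> R -> R) : Prop :=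
  forall x t eps, 0 < eps -> exists d, 0 < d /\
    forall y s, Rabs (y - x) < d -> Rabs (s - t) < d ->
      Rabs (f y s - f x t) < eps.

Definition partial_x (f fx : R -> R -> R) : Prop :=
  forall x t, derivable_pt_lim (fun y => f y t) x (fx x t).

Definition partial_t (f ft : R -> R -> R) : Prop :=
  forall x t, derivable_pt_lim (fun s => f x s) t (ft x t).

CoInductive smooth2 (f : R -> R -> R) : Prop :=
  smooth2_intro :
    cont2 f ->
    (exists fx, partial_x f fx /\ smooth2 fx) ->
    (exists ft, partial_t f ft /\ smooth2 ft) ->
    smooth2 f.

Definition compact_support2 (f : R -> R -> R) : Prop :=
  exists L, 0 < L /\ forall x t, (L < Rabs x \/ L < Rabs t) -> f x t = 0.

Definition test_fun (psi : R -> R -> R) : Prop :=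
  smooth2 psi /\ compact_support2 psi.

Definition deriv_nonneg (f : R -> R) (t l : R) : Prop :=
  (0 < t -> derivable_pt_lim f t l) /\
  (t = 0 -> forall eps, 0 < eps -> exists d, 0 < d /\
     forall h, 0 < h < d -> Rabs ((f h - f 0) / h - l) < eps).

Definition cont_nonneg (f : R -> R) : Prop :=
  forall t, 0 <= t -> forall eps, 0 < eps -> exists d, 0 < d /\
    forall s, 0 <= s -> Rabs (s - t) < d -> Rabs (f s - f t) < eps.

Definition C1_nonneg (f : R -> R) : Prop :=
  exists f', (forall t, 0 <= t -> deriv_nonneg f t (f' t)) /\ cont_nonneg f'.

(** <a, phi> = int_0^oo int_R a0 phi dx dt + int_0^oo c(t) phi(xi(t),t) dt,
    where a = a0 + c(t) delta(x - xi(t)). *)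
Definition pairing (a0 : R -> R -> R) (c xi : R -> R) (phi : R -> R -> R)
  (v : R) : Prop :=
  exists v1 v2, DInt (fun x t => a0 x t * phi x t) v1 /\
    Int0inf (fun t => c t * phi (xi t) t) v2 /\ v = v1 + v2.

Definition piecewise (xi l r : R -> R) (x t : R) : R :=
  if Rlt_dec x (xi t) then l t else r t.

Definition riemann (vm vp x : R) : R := if Rlt_dec x 0 then vm else vp.

(** Weak solution (with omega(0) = 0) of the droplet model for
    alpha = alpha0 + w delta(x - xi(t)), alpha u = alpha0 u0 + w xi' delta,
    alpha u^2 = alpha0 u0^2 + sigma w xi' delta, sigma = xi',
    with initial data (aI, uI). *)
Definition weak_solution (mu ua : R) (aI uI : R -> R)
  (alpha0 u0 : R -> R -> R) (w xi dxi : R -> R) : Prop :=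
  forall psi psix psit, test_fun psi -> partial_x psi psix ->
    partial_t psi psit ->
    (exists p1 p2 q,
       pairing alpha0 w xi psit p1 /\
       pairing (fun x t => alpha0 x t * u0 x t) (fun t => w t * dxi t) xi psix p2 /\
       IntR (fun x => aI x * psi x 0) q /\
       p1 + p2 = - q) /\
    (exists p1 p2 p3 q,
       pairing (fun x t => alpha0 x t * u0 x t) (fun t => w t * dxi t) xi psit p1 /\
       pairing (fun x t => alpha0 x t * (u0 x t)^2)
               (fun t => dxi t * w t * dxi t) xi psix p2 /\
       pairing (fun x t => alpha0 x t * (ua - u0 x t))
               (fun t => (ua - dxi t) * w t) xi psi p3 /\
       IntR (fun x => aI x * uI x * psi x 0) q /\
       p1 + p2 + mu * p3 = - q).

Definition delta_shock_solution (mu ua am um ap up : R)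
  (ul ur w xi : R -> R) : Prop :=
  exists dxi : R -> R,
    (forall t, 0 < t -> derivable_pt_lim xi t (dxi t)) /\
    weak_solution mu ua (riemann am ap) (riemann um up)
      (piecewise xi (fun _ => am) (fun _ => ap)) (piecewise xi ul ur)
      w xi dxi /\
    (forall t, 0 < t -> ur t < dxi t < ul t).

(* Fix a test function psi.  For a density rho = (rho_l | rho_r) + m delta_xi put
   Phi(t) = int rho(x,t) psi(x,t) dx + m(t) psi(xi(t),t).  Differentiating under the integral
   sign and along the shock curve, the states' ODEs rho_l' = k s_l, rho_r' = k s_r and the
   generalized Rankine-Hugoniot condition m' = (rho_r - rho_l) xi' - (f_r - f_l) + k m_s
   turn Phi' into the time density of <rho, psi_t> + <f, psi_x> + k <s, psi>.  Integrating
   up to a time beyond the support of psi leaves -Phi(0), the initial-data term.  The mass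
   equation is the case k = 0; the momentum equation is k = mu, since u_l and u_r solve
   u' = mu (u_a - u). *)

From Stdlib Require Import Reals Lra FunctionalExtensionality.
From Coquelicot Require Import Coquelicot.
Open Scope R_scope.

Lemma RInt_rel_is_RInt f a b v : RInt_rel f a b v <-> is_RInt f a b v.
Proof.
  split.
  - intros [pr <-]. rewrite <- (RInt_Reals f a b pr).
    exact (RInt_correct (V := R_CompleteNormedModule) f a b (ex_RInt_Reals_1 f a b pr)).
  - intros Hf. assert (Hex : ex_RInt f a b) by (exists v; exact Hf).
    exists (ex_RInt_Reals_0 f a b Hex). rewrite <- RInt_Reals.
    exact (is_RInt_unique (V := R_CompleteNormedModule) f a b v Hf).
Qed.

Lemma is_RInt_RInt_continuous (f : R -> R) a b :
  (forall x, continuous f x) -> is_RInt f a b (RInt f a b).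
Proof.
  intros Hf. apply (RInt_correct (V := R_CompleteNormedModule)).
  apply (ex_RInt_continuous (V := R_CompleteNormedModule)). intros; apply Hf.
Qed.

Lemma continuous_eps (f : R -> R) x :
  continuous f x <-> forall eps, 0 < eps -> exists d, 0 < d /\
    forall y, Rabs (y - x) < d -> Rabs (f y - f x) < eps.
Proof.
  split.
  - intros H eps Heps. apply continuity_pt_filterlim in H.
    destruct (proj1 (continuity_pt_locally f x) H (mkposreal eps Heps)) as [d Hd].
    exists d. split; [apply cond_pos | exact Hd].
  - intros H. apply continuity_pt_filterlim, continuity_pt_locally. intros eps.
    destruct (H eps (cond_pos eps)) as [d [Hd Hy]].
    exists (mkposreal d Hd). exact Hy.
Qed.

Lemma continuous_Rplus (f g : R -> R) x :
  continuous f x -> continuous g x -> continuous (fun y => f y + g y) x.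
Proof. exact (continuous_plus f g x). Qed.

Lemma continuous_Rminus (f g : R -> R) x :
  continuous f x -> continuous g x -> continuous (fun y => f y - g y) x.
Proof. exact (continuous_minus f g x). Qed.

Lemma continuous_Rmult (f g : R -> R) x :
  continuous f x -> continuous g x -> continuous (fun y => f y * g y) x.
Proof. exact (continuous_mult f g x). Qed.

Lemma continuous_of_is_derive (f : R -> R) x l : is_derive f x l -> continuous f x.
Proof.
  intros Hf. apply (ex_derive_continuous (K := R_AbsRing) (V := R_NormedModule)). now exists l.
Qed.

Lemma is_derive_Rplus (f g : R -> R) x a b :
  is_derive f x a -> is_derive g x b -> is_derive (fun y => f y + g y) x (a + b).
Proof. exact (is_derive_plus f g x a b). Qed.

Lemma is_derive_Rmult (f g : R -> R) x a b :
  is_derive f x a -> is_derive g x b -> is_derive (fun y => f y * g y) x (a * g x + f x * b).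
Proof. intros Hf Hg. apply (is_derive_mult f g x a b Hf Hg). intros; apply Rmult_comm. Qed.

Lemma cont2_comp (h : R -> R -> R) (a b : R -> R) t :
  cont2 h -> continuous a t -> continuous b t ->
  continuous (fun s => h (a s) (b s)) t.
Proof.
  rewrite !continuous_eps. intros Hh Ha Hb eps Heps.
  destruct (Hh (a t) (b t) eps Heps) as [d [Hd Hab]].
  destruct (Ha d Hd) as [da [Hda Ha']]. destruct (Hb d Hd) as [db [Hdb Hb']].
  exists (Rmin da db). split; [now apply Rmin_pos|].
  intros y Hy. apply Hab.
  - apply Ha'. eapply Rlt_le_trans; [exact Hy | apply Rmin_l].
  - apply Hb'. eapply Rlt_le_trans; [exact Hy | apply Rmin_r].
Qed.

Lemma cont2_continuous_x (h : R -> R -> R) t x : cont2 h -> continuous (fun y => h y t) x.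
Proof.
  intros Hh. apply (cont2_comp h id (fun _ => t)); auto using continuous_id, continuous_const.
Qed.

Lemma differentiable_pt_lim_partials (h hx ht : R -> R -> R) x t :
  partial_x h hx -> partial_t h ht -> cont2 hx -> cont2 ht ->
  differentiable_pt_lim h x t (hx x t) (ht x t).
Proof.
  intros Hpx Hpt Hcx Hct eps.
  assert (He : 0 < eps / 2) by (generalize (cond_pos eps); lra).
  destruct (Hcx x t _ He) as [d1 [Hd1 Hx]]. destruct (Hct x t _ He) as [d2 [Hd2 Ht]].
  exists (mkposreal _ (Rmin_pos _ _ Hd1 Hd2)). simpl. intros u v Hu Hv.
  assert (Hu1 : Rabs (u - x) < d1) by (eapply Rlt_le_trans; [exact Hu | apply Rmin_l]).
  assert (Hv1 : Rabs (v - t) < d1) by (eapply Rlt_le_trans; [exact Hv | apply Rmin_l]).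
  assert (Hv2 : Rabs (v - t) < d2) by (eapply Rlt_le_trans; [exact Hv | apply Rmin_r]).
  destruct (MVT_cor4 (fun y => h y v) (fun y => hx y v) x (Rabs (u - x)))
    with (b := u) as [c [Ec Hc]]; [intros; apply is_derive_Reals, Hpx | lra |].
  destruct (MVT_cor4 (fun s => h x s) (fun s => ht x s) t (Rabs (v - t)))
    with (b := v) as [c' [Ec' Hc']]; [intros; apply is_derive_Reals, Hpt | lra |].
  (* split the increment along the two coordinate directions *)
  replace (h u v - h x t - (hx x t * (u - x) + ht x t * (v - t))) with
    ((hx c v - hx x t) * (u - x) + (ht x c' - ht x t) * (v - t))
    by (replace (h u v - h x t) with ((h u v - h x v) + (h x v - h x t)) by ring;
        rewrite Ec, Ec'; ring).
  assert (Hcx' : Rabs (hx c v - hx x t) < eps / 2) by (apply Hx; lra).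
  assert (Hct' : Rabs (ht x c' - ht x t) < eps / 2)
    by (apply Ht; [rewrite Rminus_diag, Rabs_R0 | ]; lra).
  eapply Rle_trans; [apply Rabs_triang|]. rewrite !Rabs_mult.
  generalize (Rmax_l (Rabs (u - x)) (Rabs (v - t))) (Rmax_r (Rabs (u - x)) (Rabs (v - t)))
    (Rabs_pos (u - x)) (Rabs_pos (v - t)).
  nra.
Qed.

Lemma is_derive_comp_curve (h hx ht : R -> R -> R) (b : R -> R) t db :
  partial_x h hx -> partial_t h ht -> cont2 hx -> cont2 ht -> is_derive b t db ->
  is_derive (fun s => h (b s) s) t (hx (b t) t * db + ht (b t) t).
Proof.
  intros Hpx Hpt Hcx Hct Hb. apply is_derive_Reals.
  replace (hx (b t) t * db + ht (b t) t) with (hx (b t) t * db + ht (b t) t * 1) by ring.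
  apply (derivable_pt_lim_comp_2d h b id).
  - now apply differentiable_pt_lim_partials.
  - now apply is_derive_Reals.
  - apply derivable_pt_lim_id.
Qed.

Lemma is_derive_RInt_param_bounds (h ht : R -> R -> R) (a b : R -> R) t da db :
  cont2 h -> cont2 ht -> partial_t h ht -> is_derive a t da -> is_derive b t db ->
  is_derive (fun s => RInt (fun x => h x s) (a s) (b s)) t
    (RInt (fun x => ht x t) (a t) (b t) - h (a t) t * da + h (b t) t * db).
Proof.
  intros Hc Hct Hp Ha Hb.
  assert (Hex : forall s u v, ex_RInt (fun x => h x s) u v).
  { intros. apply (ex_RInt_continuous (V := R_CompleteNormedModule)).
    intros; now apply cont2_continuous_x. }
  assert (HD : forall u v, Derive (fun z => h v z) u = ht v u).
  { intros. apply is_derive_unique, is_derive_Reals, Hp. }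
  assert (HDc : forall u v, continuity_2d_pt (fun u v => Derive (fun z => h v z) u) u v).
  { intros u v eps. destruct (Hct v u eps (cond_pos eps)) as [d [Hd Hu]].
    exists (mkposreal d Hd). intros. rewrite !HD. now apply Hu. }
  assert (Hcx : forall y, continuity_pt (fun x => h x t) y).
  { intros. apply continuity_pt_filterlim. now apply cont2_continuous_x. }
  assert (Hone : 0 < 1) by lra.
  replace (RInt (fun x => ht x t) (a t) (b t) - h (a t) t * da + h (b t) t * db) with
    (RInt (fun x => Derive (fun u => h x u) t) (a t) (b t) + - h (a t) t * da + h (b t) t * db)
    by (rewrite (RInt_ext _ (fun x => ht x t)) by (intros; apply HD); ring).
  apply (is_derive_RInt_param_bound_comp (fun s x => h x s)).
  - now apply filter_forall.
  - exists (mkposreal 1 Hone). now apply filter_forall.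
  - exists (mkposreal 1 Hone). now apply filter_forall.
  - exact Ha.
  - exact Hb.
  - exists (mkposreal 1 Hone). apply filter_forall.
    intros y s _. exists (ht s y). apply is_derive_Reals, Hp.
  - intros; apply HDc.
  - exists (mkposreal 1 Hone). intros; apply HDc.
  - exists (mkposreal 1 Hone). intros; apply HDc.
  - apply Hcx.
  - apply Hcx.
Qed.

Lemma RInt_partial_x (h hx : R -> R -> R) t a b :
  partial_x h hx -> cont2 hx -> RInt (fun x => hx x t) a b = h b t - h a t.
Proof.
  intros Hp Hc. apply (is_RInt_unique (V := R_CompleteNormedModule)).
  apply (is_RInt_derive (V := R_CompleteNormedModule) (fun x => h x t)).
  - intros; apply is_derive_Reals, Hp.
  - intros; now apply cont2_continuous_x.
Qed.

Definition ext0 (f : R -> R) (t : R) : R := f (Rmax t 0).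

Lemma cont_nonneg_of_deriv (f f' : R -> R) :
  (forall t, 0 <= t -> deriv_nonneg f t (f' t)) -> cont_nonneg f.
Proof.
  intros Hd t Ht eps Heps. destruct (Rle_lt_or_eq_dec 0 t Ht) as [Hpos | <-].
  - assert (Hc : continuous f t).
    { apply continuity_pt_filterlim, (derivable_continuous_pt f t).
      exists (f' t). exact (proj1 (Hd t Ht) Hpos). }
    destruct (proj1 (continuous_eps f t) Hc eps Heps) as [d [Hd0 Hy]].
    exists d. split; [exact Hd0 | intros; now apply Hy].
  - (* the right difference quotient stays within 1 of f' 0 near 0 *)
    destruct (proj2 (Hd 0 Ht) eq_refl 1 Rlt_0_1) as [d [Hd0 Hq]].
    set (C := Rabs (f' 0) + 1).
    assert (HC : 0 < C) by (unfold C; generalize (Rabs_pos (f' 0)); lra).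
    exists (Rmin d (eps / C)). split; [apply Rmin_pos; [lra | apply Rdiv_lt_0_compat; lra] |].
    intros s Hs Hsd. rewrite Rminus_0_r, Rabs_right in Hsd by lra.
    destruct (Rle_lt_or_eq_dec 0 s Hs) as [Hs0 | <-];
      [| rewrite Rminus_diag, Rabs_R0; exact Heps].
    assert (Hsd1 : s < d) by (eapply Rlt_le_trans; [exact Hsd | apply Rmin_l]).
    assert (Hsd2 : s * C < eps).
    { apply (Rmult_lt_reg_r (/ C)); [now apply Rinv_0_lt_compat|].
      rewrite Rmult_assoc, Rinv_r, Rmult_1_r by lra.
      eapply Rlt_le_trans; [exact Hsd | apply Rmin_r]. }
    assert (Hquot : Rabs ((f s - f 0) / s) <= C).
    { specialize (Hq s (conj Hs0 Hsd1)).
      replace ((f s - f 0) / s) with (f' 0 + ((f s - f 0) / s - f' 0)) by ring.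
      unfold C. eapply Rle_trans; [apply Rabs_triang | lra]. }
    replace (f s - f 0) with (s * ((f s - f 0) / s)) by (field; lra).
    rewrite Rabs_mult, (Rabs_right s) by lra. nra.
Qed.

Lemma continuous_ext0 (f : R -> R) t : cont_nonneg f -> continuous (ext0 f) t.
Proof.
  intros Hf. apply continuous_eps. intros eps Heps.
  destruct (Hf (Rmax t 0) (Rmax_r t 0) eps Heps) as [d [Hd Hs]].
  exists d. split; [exact Hd|]. intros y Hy. apply Hs; [apply Rmax_r|].
  apply Rabs_def2 in Hy. apply Rabs_def1; unfold Rmax;
    destruct (Rle_dec y 0), (Rle_dec t 0); lra.
Qed.

Lemma is_derive_ext0 (f : R -> R) t l :
  0 < t -> derivable_pt_lim f t l -> is_derive (ext0 f) t l.
Proof.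
  intros Ht Hf. apply is_derive_ext_loc with f; [| now apply is_derive_Reals].
  exists (mkposreal t Ht). intros y Hy. unfold ext0. rewrite Rmax_left; [reflexivity|].
  change (Rabs (y - t) < t) in Hy. apply Rabs_def2 in Hy. lra.
Qed.

(* [Phi] need not be differentiable at [0]: functions built with [ext0] have a kink there. *)
Lemma is_RInt_derive_right_open (Phi g : R -> R) T :
  0 < T -> (forall t, continuous g t) -> continuous Phi 0 ->
  (forall t, 0 < t <= T -> is_derive Phi t (g t)) ->
  is_RInt g 0 T (Phi T - Phi 0).
Proof.
  intros HT Hg HPhi Hd.
  set (F := fun s => RInt g s T + Phi s).
  assert (HF : forall s, 0 < s <= T -> F s = Phi T).
  { intros s Hs. unfold F.
    rewrite (is_RInt_unique (V := R_CompleteNormedModule) g s T (minus (Phi T) (Phi s))).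
    - unfold minus, plus, opp; simpl; ring.
    - apply (is_RInt_derive (V := R_CompleteNormedModule)); [| intros; apply Hg].
      intros x Hx. apply Hd. rewrite Rmin_left, Rmax_right in Hx by lra. lra. }
  assert (HF0 : continuous F 0).
  { apply continuous_Rplus; [| exact HPhi].
    apply (continuous_of_is_derive _ _ (opp (g 0))).
    apply (is_derive_RInt' (V := R_NormedModule) g _ 0 T); [| apply Hg].
    apply filter_forall. intros; apply is_RInt_RInt_continuous, Hg. }
  assert (HF0T : F 0 = Phi T).
  { destruct (Req_dec (F 0) (Phi T)) as [| Hne]; [assumption | exfalso].
    assert (Hgap : 0 < Rabs (F 0 - Phi T)) by (apply Rabs_pos_lt; lra).
    destruct (proj1 (continuous_eps F 0) HF0 _ Hgap) as [d [Hd0 Hnear]].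
    set (s := Rmin (d / 2) T).
    assert (Hs : 0 < s <= T) by (split; [apply Rmin_pos | apply Rmin_r]; lra).
    assert (Hlt : Rabs (F s - F 0) < Rabs (F 0 - Phi T)).
    { apply Hnear. rewrite Rminus_0_r, Rabs_right by lra.
      generalize (Rmin_l (d / 2) T); fold s; lra. }
    rewrite HF, Rabs_minus_sym in Hlt by exact Hs. lra. }
  replace (Phi T - Phi 0) with (RInt g 0 T) by (unfold F in HF0T; lra).
  now apply is_RInt_RInt_continuous.
Qed.

Lemma is_RInt_zero (f : R -> R) a b :
  a <= b -> (forall x, a < x < b -> f x = 0) -> is_RInt f a b 0.
Proof.
  intros Hab Hf. apply is_RInt_ext with (fun _ => 0).
  - intros x Hx. rewrite Rmin_left, Rmax_right in Hx by lra. symmetry; now apply Hf.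
  - pose proof (is_RInt_const (V := R_NormedModule) a b 0) as H0.
    unfold scal in H0; simpl in H0; unfold mult in H0; simpl in H0.
    now rewrite Rmult_0_r in H0.
Qed.

Lemma Int0inf_RInt (g ge : R -> R) T :
  0 <= T -> (forall t, 0 <= t -> g t = ge t) -> (forall t, continuous ge t) ->
  (forall t, T <= t -> ge t = 0) -> Int0inf g (RInt ge 0 T).
Proof.
  intros HT Hg Hc Hz. exists T. split; [exact HT|]. intros S HS. apply RInt_rel_is_RInt.
  apply is_RInt_ext with ge.
  { intros x Hx. rewrite Rmin_left in Hx by lra. symmetry; apply Hg; lra. }
  replace (RInt ge 0 T) with (plus (RInt ge 0 T) 0) by (unfold plus; simpl; ring).
  apply (is_RInt_Chasles (V := R_NormedModule) ge 0 T S).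
  - now apply is_RInt_RInt_continuous.
  - apply is_RInt_zero; [exact HS|]. intros; apply Hz; lra.
Qed.

Lemma IntR_piecewise (f h : R -> R) y p q L :
  0 < L -> (forall x, L < Rabs x -> h x = 0) -> (forall x, continuous h x) ->
  (forall x, f x = if Rlt_dec x y then p * h x else q * h x) ->
  IntR f (p * RInt h (- (L + 1)) y + q * RInt h y (L + 1)).
Proof.
  intros HL Hz Hc Hf. exists (L + 1 + Rabs y). intros M HM. apply RInt_rel_is_RInt.
  generalize (Rle_abs y) (Rle_abs (- y)). rewrite Rabs_Ropp. intros Hy1 Hy2.
  assert (Hleft : is_RInt h (- M) y (RInt h (- (L + 1)) y)).
  { replace (RInt h (- (L + 1)) y) with (plus 0 (RInt h (- (L + 1)) y))
      by (unfold plus; simpl; ring).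
    apply (is_RInt_Chasles (V := R_NormedModule) h (- M) (- (L + 1)) y).
    - apply is_RInt_zero; [lra|]. intros x Hx. apply Hz. rewrite Rabs_left; lra.
    - now apply is_RInt_RInt_continuous. }
  assert (Hright : is_RInt h y M (RInt h y (L + 1))).
  { replace (RInt h y (L + 1)) with (plus (RInt h y (L + 1)) 0)
      by (unfold plus; simpl; ring).
    apply (is_RInt_Chasles (V := R_NormedModule) h y (L + 1) M).
    - now apply is_RInt_RInt_continuous.
    - apply is_RInt_zero; [lra|]. intros x Hx. apply Hz. rewrite Rabs_right; lra. }
  apply (is_RInt_Chasles (V := R_NormedModule) f (- M) y M).
  - apply is_RInt_ext with (fun x => p * h x).
    + intros x Hx. rewrite Rmin_left, Rmax_right in Hx by lra.
      rewrite Hf. destruct (Rlt_dec x y); [reflexivity | lra].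
    + exact (is_RInt_scal (V := R_NormedModule) h (- M) y p _ Hleft).
  - apply is_RInt_ext with (fun x => q * h x).
    + intros x Hx. rewrite Rmin_left, Rmax_right in Hx by lra.
      rewrite Hf. destruct (Rlt_dec x y); [lra | reflexivity].
    + exact (is_RInt_scal (V := R_NormedModule) h y M q _ Hright).
Qed.

Definition vanishes_beyond (L : R) (h : R -> R -> R) : Prop :=
  forall x t, L < Rabs x \/ L < Rabs t -> h x t = 0.

Lemma derivable_pt_lim_locally_zero (f : R -> R) x l :
  derivable_pt_lim f x l -> locally x (fun y => f y = 0) -> l = 0.
Proof.
  intros Hf Hz. apply (uniqueness_limite f x); [exact Hf|].
  apply is_derive_Reals, is_derive_ext_loc with (fun _ => 0);
    [| apply (is_derive_const (K := R_AbsRing) (V := R_NormedModule))].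
  apply filter_imp with (2 := Hz). intros y Hy. now rewrite Hy.
Qed.

Lemma vanishes_beyond_locally L (h : R -> R -> R) x t :
  vanishes_beyond L h -> L < Rabs x \/ L < Rabs t ->
  locally x (fun y => h y t = 0) /\ locally t (fun s => h x s = 0).
Proof.
  assert (Hopen : forall z, L < Rabs z -> locally z (fun y => L < Rabs y)).
  { intros z Hz. exists (mkposreal (Rabs z - L) ltac:(simpl; lra)). intros y Hy.
    change (Rabs (y - z) < Rabs z - L) in Hy.
    generalize (Rabs_triang_inv z y). rewrite Rabs_minus_sym in Hy. lra. }
  intros Hh [Hx | Ht]; split.
  - apply filter_imp with (2 := Hopen x Hx). intros; apply Hh; now left.
  - apply filter_forall. intros; apply Hh; now left.
  - apply filter_forall. intros; apply Hh; now right.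
  - apply filter_imp with (2 := Hopen t Ht). intros; apply Hh; now right.
Qed.

Lemma vanishes_beyond_partial_x L (h hx : R -> R -> R) :
  vanishes_beyond L h -> partial_x h hx -> vanishes_beyond L hx.
Proof.
  intros Hh Hp x t Hxt. apply (derivable_pt_lim_locally_zero (fun y => h y t) x); [apply Hp|].
  exact (proj1 (vanishes_beyond_locally L h x t Hh Hxt)).
Qed.

Lemma vanishes_beyond_partial_t L (h ht : R -> R -> R) :
  vanishes_beyond L h -> partial_t h ht -> vanishes_beyond L ht.
Proof.
  intros Hh Hp x t Hxt. apply (derivable_pt_lim_locally_zero (fun s => h x s) t); [apply Hp|].
  exact (proj2 (vanishes_beyond_locally L h x t Hh Hxt)).
Qed.

Lemma vanishes_beyond_late L (h : R -> R -> R) x t :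
  0 < L -> vanishes_beyond L h -> L + 1 <= t -> h x t = 0.
Proof. intros HL Hh Ht. apply Hh. right. rewrite Rabs_right; lra. Qed.

Lemma RInt_vanishes_beyond_late L (h : R -> R -> R) t a b :
  0 < L -> vanishes_beyond L h -> L + 1 <= t -> RInt (fun x => h x t) a b = 0.
Proof.
  intros HL Hh Ht.
  rewrite (RInt_ext _ (fun _ => 0)) by (intros; now apply (vanishes_beyond_late L)).
  rewrite RInt_const. unfold scal; simpl; unfold mult; simpl. ring.
Qed.

Lemma smooth2_partial_x (h hx : R -> R -> R) : smooth2 h -> partial_x h hx -> smooth2 hx.
Proof.
  intros [_ [fx [Hfx Hs]] _] Hp.
  replace hx with fx; [exact Hs|].
  extensionality x; extensionality t. exact (uniqueness_limite _ _ _ _ (Hfx x t) (Hp x t)).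
Qed.

Lemma smooth2_partial_t (h ht : R -> R -> R) : smooth2 h -> partial_t h ht -> smooth2 ht.
Proof.
  intros [_ _ [ft [Hft Hs]]] Hp.
  replace ht with ft; [exact Hs|].
  extensionality x; extensionality t. exact (uniqueness_limite _ _ _ _ (Hft x t) (Hp x t)).
Qed.

Lemma smooth2_cont2 (h : R -> R -> R) : smooth2 h -> cont2 h.
Proof. now intros []. Qed.

(* The time density of [pairing (piecewise xi l r) c xi phi] when [phi] is supported in
   [|x| <= K - 1] and [xi] agrees with [xe] on [0, oo). *)
Definition pairing_density (l r c xe : R -> R) (phi : R -> R -> R) (K t : R) : R :=
  l t * RInt (fun x => phi x t) (- K) (xe t) + r t * RInt (fun x => phi x t) (xe t) K
  + ext0 c t * phi (xe t) t.

Lemma continuous_RInt_param_bounds (phi : R -> R -> R) (a b : R -> R) t da db :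
  smooth2 phi -> is_derive a t da -> is_derive b t db ->
  continuous (fun s => RInt (fun x => phi x s) (a s) (b s)) t.
Proof.
  intros [Hcont _ [phit [Hpt Hst]]] Ha Hb. eapply continuous_of_is_derive.
  apply (is_derive_RInt_param_bounds phi phit a b t da db); auto using smooth2_cont2.
Qed.

Lemma continuous_RInt_curve_left (phi : R -> R -> R) (xe se : R -> R) K t :
  smooth2 phi -> (forall s, is_derive xe s (se s)) ->
  continuous (fun s => RInt (fun x => phi x s) (- K) (xe s)) t.
Proof.
  intros Hphi Hxe. apply (continuous_RInt_param_bounds phi (fun _ => - K) xe t 0 (se t));
    [exact Hphi | apply (is_derive_const (K := R_AbsRing) (V := R_NormedModule)) | apply Hxe].
Qed.

Lemma continuous_RInt_curve_right (phi : R -> R -> R) (xe se : R -> R) K t :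
  smooth2 phi -> (forall s, is_derive xe s (se s)) ->
  continuous (fun s => RInt (fun x => phi x s) (xe s) K) t.
Proof.
  intros Hphi Hxe. apply (continuous_RInt_param_bounds phi xe (fun _ => K) t (se t) 0);
    [exact Hphi | apply Hxe | apply (is_derive_const (K := R_AbsRing) (V := R_NormedModule))].
Qed.

Lemma continuous_along_curve (phi : R -> R -> R) (xe se : R -> R) t :
  cont2 phi -> (forall s, is_derive xe s (se s)) -> continuous (fun s => phi (xe s) s) t.
Proof.
  intros Hphi Hxe. apply (cont2_comp phi xe id); [exact Hphi | | apply continuous_id].
  eapply continuous_of_is_derive, Hxe.
Qed.

Lemma continuous_pairing_density (l r c xe se : R -> R) (phi : R -> R -> R) K t :
  smooth2 phi -> (forall s, continuous l s) -> (forall s, continuous r s) ->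
  (forall s, continuous (ext0 c) s) -> (forall s, is_derive xe s (se s)) ->
  continuous (pairing_density l r c xe phi K) t.
Proof.
  intros Hphi Hl Hr Hc Hxe. unfold pairing_density.
  apply continuous_Rplus; [apply continuous_Rplus|]; apply continuous_Rmult;
    eauto using continuous_RInt_curve_left, continuous_RInt_curve_right,
      continuous_along_curve, smooth2_cont2.
Qed.

Lemma pairing_piecewise (l r c xi xe se : R -> R) (phi : R -> R -> R) L :
  0 < L -> smooth2 phi -> vanishes_beyond L phi ->
  (forall s, continuous l s) -> (forall s, continuous r s) ->
  (forall s, continuous (ext0 c) s) -> (forall s, is_derive xe s (se s)) ->
  (forall t, 0 <= t -> xi t = xe t) ->
  pairing (piecewise xi l r) c xi phi
    (RInt (pairing_density l r c xe phi (L + 1)) 0 (L + 1)).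
Proof.
  intros HL Hphi Hvan Hl Hr Hc Hxe Hxi.
  assert (Hcont := smooth2_cont2 _ Hphi).
  set (bulk := fun t => l t * RInt (fun x => phi x t) (- (L + 1)) (xe t)
                      + r t * RInt (fun x => phi x t) (xe t) (L + 1)).
  set (point := fun t => ext0 c t * phi (xe t) t).
  assert (Hpt : forall t, continuous point t).
  { intros. apply continuous_Rmult; eauto using continuous_along_curve. }
  assert (Hbulk : forall t, continuous bulk t).
  { intros. apply continuous_Rplus; apply continuous_Rmult;
      eauto using continuous_RInt_curve_left, continuous_RInt_curve_right. }
  assert (Hzero : forall t, L + 1 <= t -> bulk t = 0 /\ point t = 0).
  { intros t Ht. unfold bulk, point.
    rewrite !(RInt_vanishes_beyond_late L phi), (vanishes_beyond_late L phi) by assumption.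
    split; ring. }
  exists (RInt bulk 0 (L + 1)), (RInt point 0 (L + 1)). repeat split.
  - exists bulk. split.
    + intros t Ht. apply (IntR_piecewise _ (fun x => phi x t)); [exact HL | | |].
      * intros; apply Hvan; now left.
      * intros; now apply cont2_continuous_x.
      * intros x. unfold piecewise. rewrite Hxi by exact Ht. now destruct Rlt_dec.
    + apply Int0inf_RInt; auto; [lra | intros; now apply Hzero].
  - apply Int0inf_RInt; auto; [lra | | intros; now apply Hzero].
    intros t Ht. unfold point, ext0. rewrite Rmax_left, Hxi by exact Ht. reflexivity.
  - apply (is_RInt_unique (V := R_CompleteNormedModule)).
    apply (is_RInt_ext (fun t => bulk t + point t)); [intros; unfold bulk, point; reflexivity|].
    apply (is_RInt_plus (V := R_NormedModule)); now apply is_RInt_RInt_continuous.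
Qed.

Lemma pairing_density_vanishes (l r c xe : R -> R) (phi : R -> R -> R) L t :
  0 < L -> vanishes_beyond L phi -> L + 1 <= t -> pairing_density l r c xe phi (L + 1) t = 0.
Proof.
  intros HL Hvan Ht. unfold pairing_density.
  rewrite !(RInt_vanishes_beyond_late L phi), (vanishes_beyond_late L phi) by assumption. ring.
Qed.

Definition balance_law_weak (k : R) (rho f s : R -> R -> R) (rI : R -> R)
  (mr mf ms xi : R -> R) : Prop :=
  forall psi psix psit, test_fun psi -> partial_x psi psix -> partial_t psi psit ->
  exists p1 p2 p3 q,
    pairing rho mr xi psit p1 /\ pairing f mf xi psix p2 /\ pairing s ms xi psi p3 /\
    IntR (fun x => rI x * psi x 0) q /\ p1 + p2 + k * p3 = - q.

Section ShockCurve.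

Variables sig xi : R -> R.
Hypothesis sig_cont : cont_nonneg sig.
Hypothesis xi_RInt : forall t, 0 <= t -> RInt_rel sig 0 t (xi t).

Definition shock_curve (t : R) : R := RInt (ext0 sig) 0 t.

Lemma is_derive_shock_curve t : is_derive shock_curve t (ext0 sig t).
Proof.
  apply (is_derive_RInt (V := R_NormedModule) (ext0 sig) shock_curve 0 t);
    [| now apply continuous_ext0].
  apply filter_forall. intros. apply is_RInt_RInt_continuous. intros; now apply continuous_ext0.
Qed.

Lemma xi_shock_curve t : 0 <= t -> xi t = shock_curve t.
Proof.
  intros Ht. symmetry. apply (is_RInt_unique (V := R_CompleteNormedModule)).
  apply is_RInt_ext with sig; [| now apply RInt_rel_is_RInt, xi_RInt].
  intros x Hx. rewrite Rmin_left in Hx by lra. unfold ext0. now rewrite Rmax_left by lra.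
Qed.

Lemma shock_curve_0 : shock_curve 0 = 0.
Proof. exact (RInt_point (V := R_CompleteNormedModule) 0 (ext0 sig)). Qed.

Lemma derivable_pt_lim_xi t : 0 < t -> derivable_pt_lim xi t (sig t).
Proof.
  intros Ht. apply is_derive_Reals, is_derive_ext_loc with shock_curve.
  - exists (mkposreal t Ht). intros y Hy. change (Rabs (y - t) < t) in Hy.
    apply Rabs_def2 in Hy. symmetry; apply xi_shock_curve; lra.
  - replace (sig t) with (ext0 sig t) by (unfold ext0; now rewrite Rmax_left by lra).
    apply is_derive_shock_curve.
Qed.

Section Balance.

Variables (k : R) (rl rr fl fr sl sr m ms : R -> R).
Hypothesis rl_deriv : forall t, is_derive rl t (k * sl t).
Hypothesis rr_deriv : forall t, is_derive rr t (k * sr t).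
Hypotheses (fl_cont : forall t, continuous fl t) (fr_cont : forall t, continuous fr t).
Hypotheses (sl_cont : forall t, continuous sl t) (sr_cont : forall t, continuous sr t).
Hypothesis m_deriv : forall t, 0 <= t ->
  deriv_nonneg m t ((rr t - rl t) * sig t - (fr t - fl t) + k * ms t).
Hypothesis ms_cont : forall t, continuous (ext0 ms) t.
Hypothesis m_0 : m 0 = 0.

Lemma is_derive_pairing_density (psi psix psit : R -> R -> R) L t :
  0 < L -> 0 < t -> smooth2 psi -> vanishes_beyond L psi ->
  partial_x psi psix -> partial_t psi psit ->
  is_derive (pairing_density rl rr m shock_curve psi (L + 1)) t
    (pairing_density rl rr m shock_curve psit (L + 1) t
     + pairing_density fl fr (fun s => m s * sig s) shock_curve psix (L + 1) t
     + k * pairing_density sl sr ms shock_curve psi (L + 1) t).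
Proof.
  intros HL Ht Hsm Hvan Hpx Hpt.
  assert (Hc := smooth2_cont2 _ Hsm).
  assert (Hcx := smooth2_cont2 _ (smooth2_partial_x _ _ Hsm Hpx)).
  assert (Hct := smooth2_cont2 _ (smooth2_partial_t _ _ Hsm Hpt)).
  assert (Hedge : psi (- (L + 1)) t = 0 /\ psi (L + 1) t = 0).
  { split; apply Hvan; left; [rewrite Rabs_left | rewrite Rabs_right]; lra. }
  assert (Hpos : forall f : R -> R, ext0 f t = f t)
    by (intros; unfold ext0; now rewrite Rmax_left by lra).
  assert (Hconst : forall c, is_derive (fun _ : R => c) t 0)
    by (intros; apply (is_derive_const (K := R_AbsRing) (V := R_NormedModule))).
  pose proof (is_derive_RInt_param_bounds psi psit (fun _ => - (L + 1)) shock_curve t 0 _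
                Hc Hct Hpt (Hconst _) (is_derive_shock_curve t)) as dA.
  pose proof (is_derive_RInt_param_bounds psi psit shock_curve (fun _ => L + 1) t _ 0
                Hc Hct Hpt (is_derive_shock_curve t) (Hconst _)) as dB.
  pose proof (is_derive_comp_curve psi psix psit shock_curve t _ Hpx Hpt Hcx Hct
                (is_derive_shock_curve t)) as dY.
  pose proof (is_derive_ext0 m t _ Ht (proj1 (m_deriv t (Rlt_le _ _ Ht)) Ht)) as dm.
  pose proof (is_derive_Rplus _ _ _ _ _
    (is_derive_Rplus _ _ _ _ _ (is_derive_Rmult _ _ _ _ _ (rl_deriv t) dA)
       (is_derive_Rmult _ _ _ _ _ (rr_deriv t) dB))
    (is_derive_Rmult _ _ _ _ _ dm dY)) as dPhi.
  unfold pairing_density.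
  match goal with |- is_derive _ _ ?g => match type of dPhi with is_derive _ _ ?l =>
    replace g with l; [exact dPhi |] end end.
  rewrite !Hpos, !(RInt_partial_x psi psix) by assumption. cbv beta.
  destruct Hedge as [-> ->]. ring.
Qed.

Lemma pairing_density_0 (psi : R -> R -> R) K :
  pairing_density rl rr m shock_curve psi K 0
  = rl 0 * RInt (fun x => psi x 0) (- K) 0 + rr 0 * RInt (fun x => psi x 0) 0 K.
Proof.
  unfold pairing_density, ext0. rewrite Rmax_left, m_0, shock_curve_0 by lra. ring.
Qed.

Theorem balance_law_weak_delta_shock :
  balance_law_weak k (piecewise xi rl rr) (piecewise xi fl fr) (piecewise xi sl sr)
    (riemann (rl 0) (rr 0)) m (fun t => m t * sig t) ms xi.
Proof.
  intros psi psix psit [Hsm [L [HL Hvan]]] Hpx Hpt.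
  assert (Hsmx := smooth2_partial_x _ _ Hsm Hpx).
  assert (Hsmt := smooth2_partial_t _ _ Hsm Hpt).
  assert (Hvanx := vanishes_beyond_partial_x _ _ _ Hvan Hpx).
  assert (Hvant := vanishes_beyond_partial_t _ _ _ Hvan Hpt).
  assert (Hrl : forall t, continuous rl t) by (intros; eapply continuous_of_is_derive, rl_deriv).
  assert (Hrr : forall t, continuous rr t) by (intros; eapply continuous_of_is_derive, rr_deriv).
  assert (Hm : forall t, continuous (ext0 m) t)
    by (intros; apply continuous_ext0; eapply cont_nonneg_of_deriv, m_deriv).
  assert (Hmf : forall t, continuous (ext0 (fun s => m s * sig s)) t)
    by (intros; apply continuous_Rmult; [apply Hm | now apply continuous_ext0]).
  set (d1 := pairing_density rl rr m shock_curve psit (L + 1)).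
  set (d2 := pairing_density fl fr (fun s => m s * sig s) shock_curve psix (L + 1)).
  set (d3 := pairing_density sl sr ms shock_curve psi (L + 1)).
  set (Phi := pairing_density rl rr m shock_curve psi (L + 1)).
  assert (Hcont : forall l r c phi, smooth2 phi -> (forall s, continuous l s) ->
            (forall s, continuous r s) -> (forall s, continuous (ext0 c) s) ->
            forall t, continuous (pairing_density l r c shock_curve phi (L + 1)) t).
  { intros. apply (continuous_pairing_density _ _ _ _ (ext0 sig));
      auto using is_derive_shock_curve. }
  assert (Hsum : is_RInt (fun t => d1 t + d2 t + k * d3 t) 0 (L + 1)
                   (RInt d1 0 (L + 1) + RInt d2 0 (L + 1) + k * RInt d3 0 (L + 1))).
  { apply (is_RInt_plus (V := R_NormedModule));
      [apply (is_RInt_plus (V := R_NormedModule)) | apply (is_RInt_scal (V := R_NormedModule))];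
      apply is_RInt_RInt_continuous; intros; apply Hcont; auto. }
  assert (Hftc : is_RInt (fun t => d1 t + d2 t + k * d3 t) 0 (L + 1) (Phi (L + 1) - Phi 0)).
  { apply is_RInt_derive_right_open; [lra | | apply Hcont; auto |].
    - intros. apply continuous_Rplus; [apply continuous_Rplus |]; try apply Hcont; auto.
      apply (continuous_scal_r k d3). apply Hcont; auto.
    - intros t [Ht _]. now apply is_derive_pairing_density. }
  unfold Phi in Hftc. rewrite pairing_density_vanishes, pairing_density_0 in Hftc
    by (assumption || apply Rle_refl).
  apply (is_RInt_unique (V := R_CompleteNormedModule)) in Hsum, Hftc.
  exists (RInt d1 0 (L + 1)), (RInt d2 0 (L + 1)), (RInt d3 0 (L + 1)),
    (rl 0 * RInt (fun x => psi x 0) (- (L + 1)) 0 + rr 0 * RInt (fun x => psi x 0) 0 (L + 1)).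
  split; [| split; [| split; [| split]]];
    try (apply (pairing_piecewise _ _ _ _ _ (ext0 sig));
         auto using is_derive_shock_curve, xi_shock_curve).
  - apply (IntR_piecewise _ (fun x => psi x 0)); [exact HL | | |].
    + intros; apply Hvan; now left.
    + intros; apply cont2_continuous_x, smooth2_cont2, Hsm.
    + intros x. unfold riemann. now destruct Rlt_dec.
  - lra.
Qed.

End Balance.
End ShockCurve.

Lemma balance_law_weak_ext k (rho f s : R -> R -> R) rI mr mf ms xi
  (rho' f' s' : R -> R -> R) rI' mf' :
  (forall x t, rho x t = rho' x t) -> (forall x t, f x t = f' x t) ->
  (forall x t, s x t = s' x t) -> (forall x, rI x = rI' x) -> (forall t, mf t = mf' t) ->
  balance_law_weak k rho f s rI mr mf ms xi -> balance_law_weak k rho' f' s' rI' mr mf' ms xi.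
Proof.
  intros Hrho Hf Hs HI Hmf.
  replace rho' with rho by (extensionality x; extensionality t; apply Hrho).
  replace f' with f by (extensionality x; extensionality t; apply Hf).
  replace s' with s by (extensionality x; extensionality t; apply Hs).
  replace rI' with rI by (extensionality x; apply HI).
  now replace mf' with mf by (extensionality t; apply Hmf).
Qed.

Lemma weak_solution_of_balance_laws mu ua (aI uI : R -> R) (alpha0 u0 : R -> R -> R)
  (w xi dxi : R -> R) :
  balance_law_weak 0 alpha0 (fun x t => alpha0 x t * u0 x t) (fun _ _ => 0) aI
    w (fun t => w t * dxi t) (fun _ => 0) xi ->
  balance_law_weak mu (fun x t => alpha0 x t * u0 x t) (fun x t => alpha0 x t * (u0 x t) ^ 2)
    (fun x t => alpha0 x t * (ua - u0 x t)) (fun x => aI x * uI x)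
    (fun t => w t * dxi t) (fun t => dxi t * w t * dxi t) (fun t => (ua - dxi t) * w t) xi ->
  weak_solution mu ua aI uI alpha0 u0 w xi dxi.
Proof.
  intros Hmass Hmom psi psix psit Hpsi Hpx Hpt. split.
  - destruct (Hmass psi psix psit Hpsi Hpx Hpt) as (p1 & p2 & p3 & q & H1 & H2 & _ & Hq & E).
    exists p1, p2, q. repeat split; auto. lra.
  - destruct (Hmom psi psix psit Hpsi Hpx Hpt) as (p1 & p2 & p3 & q & H1 & H2 & H3 & Hq & E).
    exists p1, p2, p3, q. auto.
Qed.

Lemma deriv_nonneg_eq (f : R -> R) t l l' : l = l' -> deriv_nonneg f t l -> deriv_nonneg f t l'.
Proof. now intros ->. Qed.

Lemma mass_balance_delta_shock (am ap : R) (ul ur w sig xi : R -> R) :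
  cont_nonneg sig -> (forall t, 0 <= t -> RInt_rel sig 0 t (xi t)) ->
  (forall t, continuous ul t) -> (forall t, continuous ur t) ->
  (forall t, 0 <= t -> deriv_nonneg w t ((ap - am) * sig t - (ap * ur t - am * ul t))) ->
  w 0 = 0 ->
  balance_law_weak 0 (piecewise xi (fun _ => am) (fun _ => ap))
    (fun x t => piecewise xi (fun _ => am) (fun _ => ap) x t * piecewise xi ul ur x t)
    (fun _ _ => 0) (riemann am ap) w (fun t => w t * sig t) (fun _ => 0) xi.
Proof.
  intros Hsig Hxi Hul Hur Hw Hw0.
  eapply balance_law_weak_ext; [.. | apply (balance_law_weak_delta_shock sig xi Hsig Hxi 0
    (fun _ => am) (fun _ => ap) (fun t => am * ul t) (fun t => ap * ur t)
    (fun _ => 0) (fun _ => 0) w (fun _ => 0))].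
  all: intros; cbv beta; try (unfold piecewise; destruct Rlt_dec; ring).
  all: first
    [ reflexivity | exact Hw0
    | rewrite Rmult_0_l; apply (is_derive_const (K := R_AbsRing) (V := R_NormedModule))
    | apply continuous_const
    | apply continuous_Rmult; auto using continuous_const
    | eapply deriv_nonneg_eq; [| apply Hw; assumption]; ring ].
Qed.

Lemma momentum_balance_delta_shock (mu ua am ap um up : R) (ul ur w sig xi : R -> R) :
  cont_nonneg sig -> (forall t, 0 <= t -> RInt_rel sig 0 t (xi t)) ->
  (forall t, is_derive ul t (mu * (ua - ul t))) -> (forall t, is_derive ur t (mu * (ua - ur t))) ->
  ul 0 = um -> ur 0 = up -> cont_nonneg w ->
  (forall t, 0 <= t -> deriv_nonneg (fun s => w s * sig s) t
     ((ap * ur t - am * ul t) * sig t - (ap * (ur t)^2 - am * (ul t)^2)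
      + mu * (ua - sig t) * w t)) ->
  w 0 = 0 ->
  balance_law_weak mu
    (fun x t => piecewise xi (fun _ => am) (fun _ => ap) x t * piecewise xi ul ur x t)
    (fun x t => piecewise xi (fun _ => am) (fun _ => ap) x t * (piecewise xi ul ur x t) ^ 2)
    (fun x t => piecewise xi (fun _ => am) (fun _ => ap) x t * (ua - piecewise xi ul ur x t))
    (fun x => riemann am ap x * riemann um up x)
    (fun t => w t * sig t) (fun t => sig t * w t * sig t) (fun t => (ua - sig t) * w t) xi.
Proof.
  intros Hsig Hxi Hul Hur Hul0 Hur0 Hwc Hmom Hw0.
  assert (Hulc : forall t, continuous ul t) by (intros; eapply continuous_of_is_derive, Hul).
  assert (Hurc : forall t, continuous ur t) by (intros; eapply continuous_of_is_derive, Hur).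
  (* the relaxation ODE u' = mu (ua - u) is the momentum source of each constant state *)
  assert (Hscal : forall c f, (forall t, is_derive f t (mu * (ua - f t))) ->
            forall t, is_derive (fun s => c * f s) t (mu * (c * (ua - f t)))).
  { intros c f Hf t. replace (mu * (c * (ua - f t))) with (0 * f t + c * (mu * (ua - f t)))
      by ring.
    apply is_derive_Rmult; [| apply Hf].
    apply (is_derive_const (K := R_AbsRing) (V := R_NormedModule)). }
  assert (Hms : forall t, continuous (ext0 (fun s => (ua - sig s) * w s)) t).
  { intros. apply (continuous_Rmult (fun s => ua - ext0 sig s) (ext0 w));
      [apply continuous_Rminus |]; auto using continuous_const, continuous_ext0. }
  eapply balance_law_weak_ext; [.. | apply (balance_law_weak_delta_shock sig xi Hsig Hxi mu
    (fun t => am * ul t) (fun t => ap * ur t)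
    (fun t => am * (ul t * ul t)) (fun t => ap * (ur t * ur t))
    (fun t => am * (ua - ul t)) (fun t => ap * (ua - ur t))
    (fun t => w t * sig t) (fun t => (ua - sig t) * w t))].
  all: intros; cbv beta;
    try (unfold piecewise, riemann; destruct Rlt_dec; rewrite ?Hul0, ?Hur0; ring).
  all: first
    [ ring | rewrite Hw0; ring | apply Hscal; assumption | apply Hms
    | eapply deriv_nonneg_eq; [| apply Hmom; assumption]; ring
    | solve [repeat first [ apply continuous_Rmult | apply continuous_Rminus
                          | apply continuous_const | apply Hulc | apply Hurc ]] ].
Qed.

Theorem mainTheorem10 :
  forall (mu ua am ap um up : R),
    0 < mu -> 0 < am -> 0 < ap -> up < um ->
    let ul := fun t => ua + (um - ua) * exp (- mu * t) in
    let ur := fun t => ua + (up - ua) * exp (- mu * t) in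
    forall (w sig : R -> R),
      C1_nonneg w -> C1_nonneg sig ->
      (forall t, 0 <= t -> deriv_nonneg w t
          ((ap - am) * sig t - (ap * ur t - am * ul t))) ->
      (forall t, 0 <= t -> deriv_nonneg (fun s => w s * sig s) t
          ((ap * ur t - am * ul t) * sig t
           - (ap * (ur t)^2 - am * (ul t)^2)
           + mu * (ua - sig t) * w t)) ->
      w 0 = 0 ->
      (forall t, 0 <= t -> ur t < sig t < ul t) ->
      forall xi : R -> R,
        (forall t, 0 <= t -> RInt_rel sig 0 t (xi t)) ->
        delta_shock_solution mu ua am um ap up ul ur w xi.
Proof.
  intros mu ua am ap um up _ _ _ _ ul ur w sig [w' [Hw' _]] [sig' [Hsig' _]] Hmass Hmom Hw0
    Hlax xi Hxi.
  assert (Hsig := cont_nonneg_of_deriv sig sig' Hsig').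
  assert (Hul : forall t, is_derive ul t (mu * (ua - ul t)))
    by (intros; unfold ul; auto_derive; [auto | ring]).
  assert (Hur : forall t, is_derive ur t (mu * (ua - ur t)))
    by (intros; unfold ur; auto_derive; [auto | ring]).
  exists sig. split; [| split].
  - intros; now apply (derivable_pt_lim_xi sig xi).
  - apply weak_solution_of_balance_laws.
    + apply mass_balance_delta_shock; auto; intros; eapply continuous_of_is_derive; auto.
    + apply momentum_balance_delta_shock; auto.
      * unfold ul. rewrite Rmult_0_r, exp_0. ring.
      * unfold ur. rewrite Rmult_0_r, exp_0. ring.
      * exact (cont_nonneg_of_deriv w w' Hw').
  - intros t Ht. apply Hlax. lra.
Qed.
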